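(* Let $\varepsilon>0$ and let $H\ge\max_p r_p$ be an integer. Then the assignment $\big(\tfrac12\alpha_p\big)_{p\in\Pi}$, $\big(\tfrac12\beta_{t,\tau}\big)_{t\in T,1\le\tau\le H}$, $\big(\tfrac12\beta_{r,\tau}\big)_{r\in R,1\le\tau\le H}$ is a feasible solution of the dual program $\mathcal D_{\varepsilon,H}$, and consequently $\mathcal D_\varepsilon\le 2\,\mathrm{val}(\mathcal P_{\varepsilon,H})$.
   Context: Network. $S,T,R,D$ are pairwise disjoint finite sets (sources, transmitters, receivers, destinations). Each transmitter $t\in T$ is attached to a source $s(t)\in S$ via a link of integer delay $d(s(t),t)\ge 0$; each receiver $r\in R$ is attached to a destination $d(r)\in D$ via a link of integer delay $d(r,d(r))\ge 0$. A set $E_R\subseteq T\times R$ of reconfigurable edges is given, each $e\in E_R$ with integer delay $d(e)\ge 1$. A set $E_\ell\subseteq S\times D$ of fixed links is given, each with integer delay $\ge0$. For $e=(t,r)\in E_R$ put $\Delta(e)=d(s(t),t)+d(e)+d(r,d(r))$. Two edges of $E_R$ are adjacent if they share a transmitter or a receiver (an edge is adjacent to itself). Packets. $\Pi$ is a finite set of unit-size packets; packet $p$ has weight $w_p>0$, release time $r_p\in\mathbb Z_{\ge1}$, source $s_p$, destination $d_p$. Let $E(p)=\{(t,r)\in E_R: s(t)=s_p,\ d(r)=d_p\}$; assume $E(p)\neq\emptyset$ for all $p$. $\Pi_\ell$ is the set of packets with $(s_p,d_p)\in E_\ell$, and $\ell_p:=d(s_p,d_p)$ for them. Fix a total order $\prec$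 on $\Pi$ with $r_p<r_q\Rightarrow p\prec q$. Algorithm ALG. Packets are processed in the order $\prec$; $p$ is processed at time $r_p$, before transmission step $r_p$. A packet assigned to a reconfigurable edge $e$ is split into $d(e)$ chunks of weight $w_p/d(e)$ assigned to $e$; $p(c)$, $w_c$, $e(c)$ denote the packet, weight and edge of chunk $c$. A chunk is pending until transmitted; $W(C)$ is the total weight of a set $C$ of chunks. When $p$ is processed, $B(p)$ is the set of pending chunks of packets $p'\prec p$; for $e=(t,r)\in E(p)$, $\mathrm{Adj}(p,e)$ = chunks of $B(p)$ whose edge is adjacent to $e$, $H(p,e)=\{c\in\mathrm{Adj}(p,e):w_c\ge w_p/d(e)\}$, $L(p,e)=\mathrm{Adj}(p,e)\setminus H(p,e)$, and $\mathrm{imp}(p,e)=w_p(d(s_p,t)+\frac{d(e)+1}{2}+d(r,d_p))+w_p|H(p,e)|+d(e)W(L(p,e))$. With $e^*\in\arg\min_{e\in E(p)}\mathrm{imp}(p,e)$: if $p\in\Pi_\ell$ and $w_p\ell_p\le\mathrm{imp}(p,e^* )$, $p$ is sent over its fixed link; otherwise $p$ is assigned to $e(p):=e^*$ and split into chunks. Scheduler: at each integer $\tau\ge1$, build $M_\tau$ greedily over pending chunks in order of decreasing weight (ties by $\prec$ on packets, then arbitrary), adding $c$ iff no chunk already in $M_\tau$ has an edge adjacent to $e(c)$; chunks of $M_\tau$ are transmitted at step $\tau$. If chunk $c$ of $p$ is transmitted at step $\tau_c$ via $e(p)=(t,r)$, its completion time is $f_c=\tau_c+1+d(s_p,t)+d(r,d_p)$,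 and $c$ is active at integer times $\tau$ with $r_p\le\tau<f_c$. Dual assignment: $\alpha_p=w_p\ell_p$ if $p$ is sent over its fixed link, and $\alpha_p=\mathrm{imp}(p,e(p))$ (computed when $p$ is processed) otherwise; $\beta_{t,\tau}$ ($t\in T$, integer $\tau\ge1$) is the total weight of chunks active at $\tau$ whose edge has transmitter $t$, and $\beta_{r,\tau}$ ($r\in R$) likewise with receiver $r$. For $\varepsilon>0$, $\mathcal D_\varepsilon=\sum_p\alpha_p-\frac{1}{2+\varepsilon}\big(\sum_{t}\sum_{\tau\ge1}\beta_{t,\tau}+\sum_r\sum_{\tau\ge1}\beta_{r,\tau}\big)$. Linear programs. For $\varepsilon>0$ and integer $H\ge\max_p r_p$, the primal $\mathcal P_{\varepsilon,H}$ has variables $x_{p,e,\tau}\ge0$ ($p\in\Pi$, $e\in E(p)$, $\tau\in\{r_p,\dots,H\}$) and $y_p\ge0$ ($p\in\Pi_\ell$): minimize $\sum_{p}\sum_{e\in E(p)}\sum_{\tau}w_px_{p,e,\tau}(\tau+\Delta(e)-r_p)+\sum_{p\in\Pi_\ell}w_p\ell_py_p$ subject to $\sum_{e,\tau}x_{p,e,\tau}+y_p\ge1$ ($p\in\Pi_\ell$); $\sum_{e,\tau}x_{p,e,\tau}\ge1$ ($p\notin\Pi_\ell$); for every $\tau\le H$, $t\in T$: $\sum_r\sum_{p:r_p\le\tau,(t,r)\in E(p)}d(t,r)x_{p,(t,r),\tau}\le\frac1{2+\varepsilon}$; for every $\tau\le H$, $r\in R$: $\sum_t\sum_{p:r_p\le\tau,(t,r)\in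 E(p)}d(t,r)x_{p,(t,r),\tau}\le\frac1{2+\varepsilon}$. $\mathrm{val}(\mathcal P_{\varepsilon,H})$ is its optimal value ($+\infty$ if infeasible). Its dual $\mathcal D_{\varepsilon,H}$ has variables $\alpha_p\ge0$ ($p\in\Pi$), $\beta_{t,\tau}\ge0$, $\beta_{r,\tau}\ge0$ ($t\in T$, $r\in R$, $1\le\tau\le H$): maximize $\sum_p\alpha_p-\frac1{2+\varepsilon}\big(\sum_t\sum_{\tau\le H}\beta_{t,\tau}+\sum_r\sum_{\tau\le H}\beta_{r,\tau}\big)$ subject to $\alpha_p-d(e)(\beta_{t,\tau}+\beta_{r,\tau})\le w_p(\tau+\Delta(e)-r_p)$ for all $p\in\Pi$, $e=(t,r)\in E(p)$, $r_p\le\tau\le H$, and $\alpha_p\le w_p\ell_p$ for all $p\in\Pi_\ell$. *)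

From HB Require Import structures.
From mathcomp Require Import all_boot all_order all_algebra.
From mathcomp Require Import classical_sets reals constructive_ereal ereal.

Set Implicit Arguments.
Unset Strict Implicit.
Unset Printing Implicit Defensive.

Import Order.TTheory GRing.Theory Num.Theory.
Local Open Scope ring_scope.

(* Sources S, transmitters T, receivers Rv, destinations D are separate      *)
(* finite types (hence pairwise disjoint); packets form the finite type P.   *)
Record instance (R : realType) := Instance {
  S : finType; T : finType; Rv : finType; D : finType; P : finType;
  src : T -> S;
  dT : T -> nat;             (* d(s(t),t) *)
  dst : Rv -> D;
  dR : Rv -> nat;            (* d(r,d(r)) *)
  ER : {set T * Rv};         (* reconfigurable edges *)
  de : T * Rv -> nat;
  EL : {set S * D};          (* fixed links *)
  ell : S * D -> nat;
  w : P -> R;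
  rl : P -> nat;
  sp : P -> S;
  dp : P -> D;
  prec : rel P               (* the total order p ≺ q (strict) *)
}.

Section Defs.
Variable R : realType.
Variable N : instance R.


Definition Ep (p : (P N)) : {set (T N) * (Rv N)} :=
  [set e in (ER N) | (src e.1 == sp p) && (dst e.2 == dp p)].

Definition inPil (p : (P N)) : bool := (sp p, dp p) \in (EL N).
Definition ellp (p : (P N)) : nat := ell (sp p, dp p).

Definition Delta (e : (T N) * (Rv N)) : nat := dT e.1 + de e + dR e.2.

Definition adj (e e' : (T N) * (Rv N)) : bool := (e.1 == e'.1) || (e.2 == e'.2).

(* A run of ALG.  [fixed p] : p is sent over its fixed link;                 *)
(* [ep p] : the edge e(p) it is assigned to otherwise;                        *)
(* [tx p k] : the transmission step of the k-th chunk (k < d(e(p))) of p.     *)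
(* A chunk is a pair (p, k).                                                  *)
Record run := Run {
  fixed : (P N) -> bool;
  ep : (P N) -> (T N) * (Rv N);
  tx : (P N) -> nat -> nat
}.

Variable A : run.

Definition chunk (c : (P N) * nat) : bool := ~~ (fixed A) c.1 && (c.2 < de ((ep A) c.1))%N.

Definition wc (c : (P N) * nat) : R := w c.1 / (de ((ep A) c.1))%:R.

(* c \in B(p): pending chunks of packets p' ≺ p when p is processed
   (at time r_p, before transmission step r_p) *)
Definition inB (p : (P N)) (c : (P N) * nat) : bool :=
  chunk c && prec c.1 p && (rl p <= (tx A) c.1 c.2)%N.

Definition inAdj (p : (P N)) (e : (T N) * (Rv N)) (c : (P N) * nat) : bool :=
  inB p c && adj ((ep A) c.1) e.

Definition inH (p : (P N)) (e : (T N) * (Rv N)) (c : (P N) * nat) : bool :=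
  inAdj p e c && (w p / (de e)%:R <= wc c).

Definition inL (p : (P N)) (e : (T N) * (Rv N)) (c : (P N) * nat) : bool :=
  inAdj p e c && ~~ inH p e c.

Definition cardH (p : (P N)) (e : (T N) * (Rv N)) : R :=
  \sum_(q : (P N)) \sum_(k < de ((ep A) q) | inH p e (q, nat_of_ord k)) 1.

Definition WL (p : (P N)) (e : (T N) * (Rv N)) : R :=
  \sum_(q : (P N)) \sum_(k < de ((ep A) q) | inL p e (q, nat_of_ord k)) wc (q, nat_of_ord k).

(* imp(p,e); note d(s_p,t) = d(s(t),t) and d(r,d_p) = d(r,d(r)) for e in E(p) *)
Definition imp (p : (P N)) (e : (T N) * (Rv N)) : R :=
  w p * ((dT e.1)%:R + ((de e)%:R + 1) / 2 + (dR e.2)%:R)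
  + w p * cardH p e + (de e)%:R * WL p e.

(* chunk c is pending at step tau (before transmissions of step tau) *)
Definition pendingAt (tau : nat) (c : (P N) * nat) : bool :=
  chunk c && (rl c.1 <= tau)%N && (tau <= (tx A) c.1 c.2)%N.

(* scheduling priority: decreasing weight, ties broken by ≺ on packets,
   remaining ties (same packet) arbitrary *)
Definition before (c c' : (P N) * nat) : bool :=
  (wc c' < wc c) || ((wc c == wc c') && ((c.1 == c'.1) || prec c.1 c'.1)).

Definition greedy (L : seq ((P N) * nat)) : seq ((P N) * nat) :=
  foldl (fun M c => if has (fun c' => adj ((ep A) c'.1) ((ep A) c.1)) M then M
                    else rcons M c) [::] L.

(* A is a run of ALG (for some resolution of the arbitrary tie-breakings) *)
Definition ALG_run : Prop :=
  (forall p : (P N),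
     (fixed A) p <-> (inPil p /\ forall e, e \in Ep p -> w p * (ellp p)%:R <= imp p e)) /\
  (forall p : (P N), ~~ (fixed A) p ->
     (ep A) p \in Ep p /\ forall e, e \in Ep p -> imp p ((ep A) p) <= imp p e) /\
  (forall c, chunk c -> (rl c.1 <= (tx A) c.1 c.2)%N) /\
  (forall tau : nat, (1 <= tau)%N ->
     exists L : seq ((P N) * nat),
       [/\ uniq L, (forall c, (c \in L) = pendingAt tau c), pairwise before L &
           forall c, chunk c -> ((tx A) c.1 c.2 == tau) = (c \in greedy L)]).

Definition fc (c : (P N) * nat) : nat :=
  ((tx A) c.1 c.2 + 1 + dT ((ep A) c.1).1 + dR ((ep A) c.1).2)%N.

Definition active (tau : nat) (c : (P N) * nat) : bool :=
  chunk c && (rl c.1 <= tau)%N && (tau < fc c)%N.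

Definition alpha (p : (P N)) : R :=
  if (fixed A) p then w p * (ellp p)%:R else imp p ((ep A) p).

Definition betaT (t : (T N)) (tau : nat) : R :=
  \sum_(q : (P N)) \sum_(k < de ((ep A) q) | active tau (q, nat_of_ord k) && (((ep A) q).1 == t))
     wc (q, nat_of_ord k).

Definition betaR (r : (Rv N)) (tau : nat) : R :=
  \sum_(q : (P N)) \sum_(k < de ((ep A) q) | active tau (q, nat_of_ord k) && (((ep A) q).2 == r))
     wc (q, nat_of_ord k).

(* every chunk is inactive at times >= horizon, so the sums over tau >= 1
   in D_eps are the finite sums over 1 <= tau < horizon *)
Definition horizon : nat :=
  (\max_(q : (P N)) \max_(k < de ((ep A) q)) fc (q, nat_of_ord k)).+1.

Definition Deps (eps : R) : R :=
  \sum_(p : (P N)) alpha p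
  - (2 + eps)^-1 * (\sum_(t : (T N)) \sum_(1 <= tau < horizon) betaT t tau
                    + \sum_(r : (Rv N)) \sum_(1 <= tau < horizon) betaR r tau).

End Defs.

Section LP.
Variable R : realType.
Variable N : instance R.

(* Primal P_{eps,H}: x p e tau is used only for e in E(p), r_p <= tau <= H,
   and y p only for p in Pi_ell; other values are irrelevant. *)
Definition primal_feasible (eps : R) (H : nat)
    (x : (P N) -> (T N) * (Rv N) -> nat -> R) (y : (P N) -> R) : Prop :=
  [/\ (forall p e tau, e \in Ep p -> (rl p <= tau <= H)%N -> 0 <= x p e tau)
      /\ (forall p, inPil p -> 0 <= y p),
      (forall p, inPil p ->
         1 <= \sum_(e in Ep p) \sum_(rl p <= tau < H.+1) x p e tau + y p),
      (forall p, ~~ inPil p ->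
         1 <= \sum_(e in Ep p) \sum_(rl p <= tau < H.+1) x p e tau),
      (forall (tau : nat) (t : (T N)), (tau <= H)%N ->
         \sum_(r : (Rv N)) \sum_(p : (P N) | (rl p <= tau)%N && ((t, r) \in Ep p))
            (de (t, r))%:R * x p (t, r) tau <= (2 + eps)^-1) &
      (forall (tau : nat) (r : (Rv N)), (tau <= H)%N ->
         \sum_(t : (T N)) \sum_(p : (P N) | (rl p <= tau)%N && ((t, r) \in Ep p))
            (de (t, r))%:R * x p (t, r) tau <= (2 + eps)^-1)].

Definition primal_obj (H : nat) (x : (P N) -> (T N) * (Rv N) -> nat -> R) (y : (P N) -> R) : R :=
  \sum_(p : (P N)) \sum_(e in Ep p) \sum_(rl p <= tau < H.+1)
      w p * x p e tau * ((tau%:R + (Delta e)%:R) - (rl p)%:R)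
  + \sum_(p : (P N) | inPil p) w p * (ellp p)%:R * y p.

(* val(P_{eps,H}) : infimum of the objective over feasible solutions
   (+oo if infeasible) *)
Definition primal_val (eps : R) (H : nat) : \bar R :=
  ereal_inf [set z : \bar R | exists x y, primal_feasible eps H x y
                                           /\ z = (primal_obj H x y)%:E].

(* feasibility in the dual D_{eps,H}; beta's are used for 1 <= tau <= H *)
Definition dual_feasible (H : nat) (a : (P N) -> R)
    (bT : (T N) -> nat -> R) (bR : (Rv N) -> nat -> R) : Prop :=
  [/\ (forall p, 0 <= a p),
      (forall t tau, (1 <= tau <= H)%N -> 0 <= bT t tau),
      (forall r tau, (1 <= tau <= H)%N -> 0 <= bR r tau),
      (forall p e tau, e \in Ep p -> (rl p <= tau <= H)%N ->
         a p - (de e)%:R * (bT e.1 tau + bR e.2 tau)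
           <= w p * ((tau%:R + (Delta e)%:R) - (rl p)%:R)) &
      (forall p, inPil p -> a p <= w p * (ellp p)%:R)].

End LP.

From HB Require Import structures.
From mathcomp Require Import all_boot all_order all_algebra.
From mathcomp Require Import classical_sets reals constructive_ereal ereal.
From mathcomp Require Import lra zify.

(* The proof is a weak-duality argument.  The halved dual assignment
   (alpha/2, beta/2) is feasible for D_{eps,H}; the only nontrivial
   constraint is the one attached to a packet p, an edge e in E(p) and a
   time tau >= r_p.  Unfolding imp(p,e), it reduces to the charging bound
     w_p |H(p,e)| + d(e) W(L(p,e)) <= d(e) (beta_{t,tau} + beta_{r,tau})
                                      + 2 w_p (tau - r_p):
   a chunk adjacent to e that is still pending at tau is active at tau and
   is charged to the beta of the endpoint it shares with e; a chunk sent
   before tau is charged to its transmission step, and since every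
   schedule M_s is a matching, each of the tau - r_p steps receives at most
   one such chunk per endpoint.  Weak duality of the primal/dual pair then
   bounds the dual objective of the halved solution by every primal value,
   and D_eps is at most the full dual objective because the betas are
   nonnegative and vanish after the last completion time. *)

Set Implicit Arguments.
Unset Strict Implicit.
Unset Printing Implicit Defensive.

Import Order.TTheory GRing.Theory Num.Theory.
Local Open Scope ring_scope.

Lemma adjC (R : realType) (N : instance R) (e e' : T N * Rv N) : adj e e' = adj e' e.
Proof. by rewrite /adj eq_sym [e.2 == _]eq_sym. Qed.

Section Chunks.
Variables (R : realType) (N : instance R) (A : run N).

Lemma greedy_nonadjacent (L : seq (P N * nat)) (c c' : P N * nat) :
  c \in greedy A L -> c' \in greedy A L -> adj (ep A c.1) (ep A c'.1) -> c = c'.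
Proof.
rewrite /greedy; set add_chunk := (fun M c => _).
suff matching_inv M : {in M &, forall a b, adj (ep A a.1) (ep A b.1) -> a = b} ->
    {in foldl add_chunk M L &, forall a b, adj (ep A a.1) (ep A b.1) -> a = b}.
  exact: matching_inv.
elim: L M => [|c0 L IHL] M matchM //=; apply: IHL => a b.
rewrite /add_chunk; case: ifP => [_|/negbT/hasPn free]; first exact: matchM.
rewrite !mem_rcons !in_cons => /orP[/eqP->|aM] /orP[/eqP->|bM] adj_ab //.
- by have := free b bM; rewrite adjC adj_ab.
- by have := free a aM; rewrite adj_ab.
- exact: matchM.
Qed.

(* Sum of F over all chunks (q, k), k < d(e(q)); cardH, WL and the betas
   are all sums of this shape. *)
Definition chunk_sum (F : P N * nat -> R) : R :=
  \sum_(q : P N) \sum_(k < de (ep A q)) F (q, nat_of_ord k).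

Lemma chunk_sum_cond (Q : pred (P N * nat)) (F : P N * nat -> R) :
  \sum_(q : P N) \sum_(k < de (ep A q) | Q (q, nat_of_ord k)) F (q, nat_of_ord k)
  = chunk_sum (fun c => if Q c then F c else 0).
Proof. by apply: eq_bigr => q _; rewrite big_mkcond. Qed.

Lemma eq_chunk_sum (F G : P N * nat -> R) :
  (forall c, F c = G c) -> chunk_sum F = chunk_sum G.
Proof. by move=> FG; apply: eq_bigr => q _; apply: eq_bigr => k _. Qed.

Lemma ler_chunk_sum (F G : P N * nat -> R) :
  (forall c, F c <= G c) -> chunk_sum F <= chunk_sum G.
Proof. by move=> FG; apply: ler_sum => q _; apply: ler_sum => k _. Qed.

Lemma chunk_sumD (F G : P N * nat -> R) :
  chunk_sum (fun c => F c + G c) = chunk_sum F + chunk_sum G.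
Proof. by rewrite -big_split; apply: eq_bigr => q _; rewrite -big_split. Qed.

Lemma chunk_sumZ (a : R) (F : P N * nat -> R) :
  a * chunk_sum F = chunk_sum (fun c => a * F c).
Proof. by rewrite mulr_sumr; apply: eq_bigr => q _; rewrite mulr_sumr. Qed.

Lemma chunk_sum_nat (m n : nat) (F : P N * nat -> nat -> R) :
  chunk_sum (fun c => \sum_(m <= s < n) F c s) = \sum_(m <= s < n) chunk_sum (F^~ s).
Proof.
by rewrite /chunk_sum exchange_big; apply: eq_bigr => q _; rewrite exchange_big.
Qed.

Lemma chunk_sum_le_single (Q : pred (P N * nat)) (x : R) : 0 <= x ->
  (forall c c', Q c -> Q c' -> c = c') ->
  chunk_sum (fun c => if Q c then x else 0) <= x.
Proof.
move=> x0 Quniq; rewrite /chunk_sum.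
case: (pickP [pred q : P N | [exists k : 'I_(de (ep A q)), Q (q, val k)]]) =>
  [q0 /existsP[k0 Qk0] | noQ].
- rewrite (bigD1 q0) //= [X in _ + X]big1 ?addr0 => [|q nq].
    rewrite (bigD1 k0) //= Qk0 big1 ?addr0 // => k nk; case: ifP => // Qk.
    by case: (Quniq _ _ Qk0 Qk) => /val_inj eqk; rewrite eqk eqxx in nk.
  apply: big1 => k _; case: ifP => // Qk.
  by case: (Quniq _ _ Qk Qk0) => eqq _; rewrite eqq eqxx in nq.
- rewrite big1 // => q _; apply: big1 => k _; case: ifP => // Qk.
  by have /existsP[] := negbFE (noQ q); exists k.
Qed.

End Chunks.

Section Schedule.
Variables (R : realType) (N : instance R) (A : run N).
Hypothesis hA : ALG_run A.

(* Among chunks whose edges are pairwise adjacent, at most one is sent at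
   any given step s >= 1, since M_s is a matching. *)
Lemma chunks_at_step_le (Q : pred (P N * nat)) (x : R) (s : nat) :
  (1 <= s)%N -> 0 <= x -> (forall c, Q c -> chunk A c) ->
  (forall c c', Q c -> Q c' -> adj (ep A c.1) (ep A c'.1)) ->
  chunk_sum A (fun c => if Q c && (tx A c.1 c.2 == s) then x else 0) <= x.
Proof.
move=> s1 x0 Qchunk Qadj; have [_ [_ [_ schedule]]] := hA.
have [L [_ _ _ sentL]] := schedule s s1.
apply: chunk_sum_le_single => // c c' /andP[Qc sc] /andP[Qc' sc'].
apply: (@greedy_nonadjacent _ _ A L); last exact: Qadj.
- by rewrite -sentL ?Qchunk.
- by rewrite -sentL ?Qchunk.
Qed.

Lemma chunks_before_le (Q : pred (P N * nat)) (x : R) (a tau : nat) :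
  (1 <= a)%N -> 0 <= x ->
  (forall c, Q c -> chunk A c /\ (a <= tx A c.1 c.2)%N) ->
  (forall c c', Q c -> Q c' -> adj (ep A c.1) (ep A c'.1)) ->
  chunk_sum A (fun c => if Q c && (tx A c.1 c.2 < tau)%N then x else 0)
    <= x * (tau - a)%:R.
Proof.
move=> a1 x0 Qsent Qadj.
have by_step c : (if Q c && (tx A c.1 c.2 < tau)%N then x else 0)
    <= \sum_(a <= s < tau) (if Q c && (tx A c.1 c.2 == s) then x else 0).
  case: ifP => [/andP[Qc early] | _]; last by apply: sumr_ge0 => s _; case: ifP.
  have tx_in : tx A c.1 c.2 \in index_iota a tau.
    by rewrite mem_index_iota early andbT; case: (Qsent c Qc).
  rewrite (bigD1_seq _ tx_in (iota_uniq _ _)) /= Qc eqxx lerDl.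
  by apply: sumr_ge0 => s _; case: ifP.
apply: (le_trans (ler_chunk_sum A by_step)).
rewrite chunk_sum_nat mulr_natr -sumr_const_nat !big_nat.
apply: ler_sum => s /andP[a_s _]; apply: chunks_at_step_le => //.
- exact: leq_trans a_s.
- by move=> c /Qsent[].
Qed.

End Schedule.

(* The per-chunk charging inequality, for a chunk of weight c adjacent to an
   edge of delay d: its cost (w_p if heavy, d c if light) is covered by the
   shared endpoints' load d c if it is still pending ("late"), and by w_p
   per shared endpoint if it was sent earlier. *)
Lemma chunk_charge (F : realFieldType) (wp d c : F) (late st sr : bool) :
  0 < d -> 0 <= c -> 0 <= wp -> st || sr ->
  (if wp / d <= c then wp else d * c)
  <= (if late && st then d * c else 0) + (if late && sr then d * c else 0)
     + (if st && ~~ late then wp else 0) + (if sr && ~~ late then wp else 0).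
Proof.
move=> d0 c0 wp0 st_sr; have dc0 : 0 <= d * c by rewrite mulr_ge0 // ltW.
case: ifP => [heavy | /negbT light].
  rewrite ler_pdivrMr // mulrC in heavy.
  by case: late st sr st_sr => [] [] [] //= _; lra.
rewrite -ltNge ltr_pdivlMr // mulrC in light.
by case: late st sr st_sr => [] [] [] //= _; lra.
Qed.

Section Charging.
Variables (R : realType) (N : instance R) (A : run N).
Hypotheses (hA : ALG_run A) (hw : forall p : P N, 0 < w p)
  (hrl : forall p : P N, (1 <= rl p)%N).
Hypotheses (hprec_irr : irreflexive (@prec R N)) (hprec_tr : transitive (@prec R N))
  (hprec_rl : forall p q : P N, (rl p < rl q)%N -> prec p q).

Lemma prec_release (p q : P N) : prec q p -> (rl q <= rl p)%N.
Proof.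
move=> qp; rewrite leqNgt; apply/negP => /hprec_rl pq.
by have := hprec_tr pq qp; rewrite hprec_irr.
Qed.

Lemma pending_active (p : P N) (c : P N * nat) (tau : nat) :
  inB A p c -> (rl p <= tau)%N -> (tau <= tx A c.1 c.2)%N -> active A tau c.
Proof.
move=> /andP[/andP[chunk_c prec_c] _] p_tau tau_tx.
rewrite /active chunk_c (leq_trans (prec_release prec_c) p_tau) /fc /=; lia.
Qed.

Lemma wc_ge0 (c : P N * nat) : 0 <= wc A c.
Proof. by rewrite divr_ge0 // ltW. Qed.

Lemma betaT_ge0 (t : T N) (tau : nat) : 0 <= betaT A t tau.
Proof. by apply: sumr_ge0 => q _; apply: sumr_ge0 => k _; apply: wc_ge0. Qed.

Lemma betaR_ge0 (r : Rv N) (tau : nat) : 0 <= betaR A r tau.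
Proof. by apply: sumr_ge0 => q _; apply: sumr_ge0 => k _; apply: wc_ge0. Qed.

Definition at_transmitter (e e' : T N * Rv N) : bool := e'.1 == e.1.
Definition at_receiver (e e' : T N * Rv N) : bool := e'.2 == e.2.

Definition chunk_cost (p : P N) (e : T N * Rv N) (c : P N * nat) : R :=
  if inAdj A p e c then
    (if w p / (de e)%:R <= wc A c then w p else (de e)%:R * wc A c)
  else 0.

Definition late_charge (tau : nat) (d : R) (sel : T N * Rv N -> bool) (c : P N * nat) : R :=
  if active A tau c && sel (ep A c.1) then d * wc A c else 0.

Definition early_charge (p : P N) (e : T N * Rv N) (tau : nat)
    (sel : T N * Rv N -> bool) (c : P N * nat) : R :=
  if (inAdj A p e c && sel (ep A c.1)) && (tx A c.1 c.2 < tau)%N then w p else 0.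

Lemma adjacent_load (p : P N) (e : T N * Rv N) :
  w p * cardH A p e + (de e)%:R * WL A p e = chunk_sum A (chunk_cost p e).
Proof.
rewrite /cardH /WL (chunk_sum_cond A (inH A p e) (fun=> 1)).
rewrite (chunk_sum_cond A (inL A p e) (wc A)) !chunk_sumZ -chunk_sumD.
apply: eq_chunk_sum => c; rewrite /chunk_cost /inL /inH.
case: (inAdj A p e c) => /=; last by rewrite mulr0 add0r mulr0.
by case: ifP => _; rewrite ?mulr1 ?mulr0 ?addr0 ?add0r.
Qed.

Lemma late_charge_sum (tau : nat) (d : R) (sel : T N * Rv N -> bool) :
  chunk_sum A (late_charge tau d sel)
  = d * \sum_(q : P N) \sum_(k < de (ep A q) |
          active A tau (q, nat_of_ord k) && sel (ep A q)) wc A (q, nat_of_ord k).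
Proof.
rewrite (chunk_sum_cond A (fun c => active A tau c && sel (ep A c.1)) (wc A)).
rewrite chunk_sumZ; apply: eq_chunk_sum => c.
by rewrite /late_charge; case: ifP; rewrite ?mulr0.
Qed.

(* Summed early charges on one endpoint: at most one chunk per step. *)
Lemma early_charge_sum (p : P N) (e : T N * Rv N) (tau : nat)
    (sel : T N * Rv N -> bool) :
  (forall e1 e2, sel e1 -> sel e2 -> adj e1 e2) ->
  chunk_sum A (early_charge p e tau sel) <= w p * (tau - rl p)%:R.
Proof.
move=> sel_adj; apply: chunks_before_le => // [|c|c c'].
- exact: ltW.
- by case/andP=> /andP[/andP[/andP[chunk_c _] released] _] _.
- by case/andP=> _ sel_c /andP[_ sel_c']; apply: sel_adj.
Qed.

Lemma at_transmitter_adj (e e1 e2 : T N * Rv N) :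
  at_transmitter e e1 -> at_transmitter e e2 -> adj e1 e2.
Proof. by rewrite /adj => /eqP-> /eqP->; rewrite eqxx. Qed.

Lemma at_receiver_adj (e e1 e2 : T N * Rv N) :
  at_receiver e e1 -> at_receiver e e2 -> adj e1 e2.
Proof. by rewrite /adj => /eqP-> /eqP->; rewrite eqxx orbT. Qed.

Lemma chunk_charged (p : P N) (e : T N * Rv N) (tau : nat) (c : P N * nat) :
  (1 <= de e)%N -> (rl p <= tau)%N ->
  chunk_cost p e c
  <= late_charge tau (de e)%:R (at_transmitter e) c + late_charge tau (de e)%:R (at_receiver e) c
     + early_charge p e tau (at_transmitter e) c + early_charge p e tau (at_receiver e) c.
Proof.
move=> de1 p_tau; set d := (de e)%:R : R; have d0 : 0 < d by rewrite ltr0n.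
have late0 (b : bool) : 0 <= (if b then d * wc A c else 0).
  by case: b; rewrite ?mulr_ge0 ?wc_ge0 // ltW.
rewrite /chunk_cost /late_charge /early_charge.
case adj_c : (inAdj A p e c) => /=; last first.
  by rewrite !addr0 addr_ge0.
have /andP[inB_c share] := adj_c.
have := chunk_charge (tau <= tx A c.1 c.2)%N d0 (wc_ge0 c) (ltW (hw p)) share.
case: (leqP tau (tx A c.1 c.2)) => [sent_late | sent_early] /=.
  by rewrite (pending_active inB_c) // !andbF.
rewrite !andbT => /le_trans; apply.
by rewrite !lerD2r add0r addr_ge0.
Qed.

Lemma charge_bound (p : P N) (e : T N * Rv N) (tau : nat) :
  (1 <= de e)%N -> (rl p <= tau)%N ->
  w p * cardH A p e + (de e)%:R * WL A p e
  <= (de e)%:R * (betaT A e.1 tau + betaR A e.2 tau) + 2 * (w p * (tau - rl p)%:R).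
Proof.
move=> de1 p_tau; rewrite adjacent_load.
apply: (le_trans (ler_chunk_sum A (fun c => chunk_charged c de1 p_tau))).
rewrite !chunk_sumD.
have -> : chunk_sum A (late_charge tau (de e)%:R (at_transmitter e))
    = (de e)%:R * betaT A e.1 tau := late_charge_sum _ _ _.
have -> : chunk_sum A (late_charge tau (de e)%:R (at_receiver e))
    = (de e)%:R * betaR A e.2 tau := late_charge_sum _ _ _.
have := early_charge_sum p e tau (@at_transmitter_adj e).
have := early_charge_sum p e tau (@at_receiver_adj e).
lra.
Qed.

End Charging.

Section DualSolution.
Variables (R : realType) (N : instance R) (A : run N).
Hypotheses (hA : ALG_run A) (hw : forall p : P N, 0 < w p).

Lemma alpha_le_imp (p : P N) (e : T N * Rv N) : e \in Ep p -> alpha A p <= imp A p e.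
Proof.
move=> e_p; have [fixedP [assigned _]] := hA; rewrite /alpha.
case: ifP => [/(fixedP p).1[_] | /negbT/assigned[_]]; exact.
Qed.

(* A packet with a fixed link is routed over it unless an edge is cheaper,
   so alpha_p never exceeds w_p l_p. *)
Lemma alpha_le_fixed (p : P N) : inPil p -> alpha A p <= w p * (ellp p)%:R.
Proof.
move=> p_fixed; rewrite /alpha; case: ifP => // /negbT not_fixed.
have [fixedP [assigned _]] := hA; have [_ imp_min] := assigned p not_fixed.
rewrite leNgt; apply: contra not_fixed => imp_lt; apply/(fixedP p).2; split=> // e e_p.
exact: le_trans (ltW imp_lt) (imp_min e e_p).
Qed.

Lemma alpha_ge0 (p : P N) : 0 <= alpha A p.
Proof.
have w0 := ltW (hw p); rewrite /alpha; case: ifP => _; first exact: mulr_ge0.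
rewrite /imp /cardH /WL !addr_ge0 ?mulr_ge0 ?divr_ge0 ?addr_ge0 //.
  by apply: sumr_ge0 => q _; apply: sumr_ge0.
by apply: sumr_ge0 => q _; apply: sumr_ge0 => k _; apply: wc_ge0.
Qed.

Hypotheses (hde : forall e, e \in ER N -> (1 <= de e)%N)
  (hrl : forall p : P N, (1 <= rl p)%N).
Hypotheses (hprec_irr : irreflexive (@prec R N)) (hprec_tr : transitive (@prec R N))
  (hprec_rl : forall p q : P N, (rl p < rl q)%N -> prec p q).

(* The dual constraint of (p, e, tau): alpha_p <= imp(p,e) and the charging
   bound give it after halving, using d(e) >= 1. *)
Lemma dual_constraint (p : P N) (e : T N * Rv N) (tau : nat) :
  e \in Ep p -> (rl p <= tau)%N ->
  alpha A p / 2 - (de e)%:R * (betaT A e.1 tau / 2 + betaR A e.2 tau / 2)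
    <= w p * ((tau%:R + (Delta e)%:R) - (rl p)%:R).
Proof.
move=> e_p p_tau; have de1 : (1 <= de e)%N by apply: hde; move: e_p; rewrite inE => /andP[].
have := charge_bound hA hw hrl hprec_irr hprec_tr hprec_rl de1 p_tau.
rewrite natrB // => charge.
have := alpha_le_imp e_p; rewrite /imp /Delta !natrD.
move: charge (hw p) (ler0n R (dT e.1)) (ler0n R (dR e.2)); rewrite -(ler1n R) in de1.
set d := (de e)%:R; set a := (dT e.1)%:R; set b := (dR e.2)%:R.
move=> *; nra.
Qed.

Lemma halved_dual_feasible (H : nat) :
  dual_feasible H (fun p => alpha A p / 2)
    (fun t tau => betaT A t tau / 2) (fun r tau => betaR A r tau / 2).
Proof.
split=> [p | t tau _ | r tau _ | p e tau e_p /andP[p_tau _] | p p_fixed].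
- by apply: divr_ge0; [exact: alpha_ge0 | ].
- by apply: divr_ge0; [exact: betaT_ge0 | ].
- by apply: divr_ge0; [exact: betaR_ge0 | ].
- exact: dual_constraint.
- by have := alpha_le_fixed p_fixed; have := alpha_ge0 p; lra.
Qed.

End DualSolution.

Lemma sum_from (R : realType) (a H : nat) (F : nat -> R) :
  (1 <= a <= H.+1)%N ->
  \sum_(a <= tau < H.+1) F tau = \sum_(1 <= tau < H.+1) (if (a <= tau)%N then F tau else 0).
Proof.
case/andP=> a1 aH; rewrite [RHS](big_cat_nat _ (n := a)) //=.
have -> : \sum_(1 <= tau < a) (if (a <= tau)%N then F tau else 0) = 0.
  by rewrite big_nat big1 // => tau /andP[_ tau_a]; rewrite leqNgt tau_a.
by rewrite add0r !big_nat; apply: eq_bigr => tau /andP[-> _].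
Qed.

Lemma sum_by_time (R : realType) (I T Rv : finType) (E : I -> {set T * Rv})
    (rel : I -> nat) (H : nat) (F : I -> T * Rv -> nat -> R) :
  (forall i, (1 <= rel i <= H)%N) ->
  \sum_(i : I) \sum_(e in E i) \sum_(rel i <= tau < H.+1) F i e tau =
  \sum_(1 <= tau < H.+1) \sum_(t : T) \sum_(r : Rv)
     \sum_(i : I | (rel i <= tau)%N && ((t, r) \in E i)) F i (t, r) tau.
Proof.
move=> rel_range.
have rel_range' i : (1 <= rel i <= H.+1)%N.
  by case/andP: (rel_range i) => -> /leqW.
under eq_bigr => i _ do under eq_bigr => e _ do rewrite (sum_from _ (rel_range' i)).
under eq_bigr => i _ do rewrite exchange_big.
rewrite exchange_big; apply: eq_bigr => tau _.
transitivity (\sum_(i : I) \sum_(e : T * Rv)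
    (if (rel i <= tau)%N && (e \in E i) then F i e tau else 0)).
  apply: eq_bigr => i _; rewrite big_mkcond; apply: eq_bigr => e _.
  by case: (e \in E i); case: (rel i <= tau)%N.
rewrite exchange_big [RHS]pair_big /=; apply: eq_bigr => -[t r] _.
by rewrite [RHS]big_mkcond.
Qed.

Definition dual_obj (R : realType) (N : instance R) (eps : R) (H : nat) (a : P N -> R)
    (bT : T N -> nat -> R) (bR : Rv N -> nat -> R) : R :=
  \sum_(p : P N) a p - (2 + eps)^-1 * (\sum_(t : T N) \sum_(1 <= tau < H.+1) bT t tau
                                      + \sum_(r : Rv N) \sum_(1 <= tau < H.+1) bR r tau).

Section WeakDuality.
Variables (R : realType) (N : instance R) (eps : R) (H : nat).
Variables (a : P N -> R) (bT : T N -> nat -> R) (bR : Rv N -> nat -> R).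
Variables (x : P N -> T N * Rv N -> nat -> R) (y : P N -> R).
Hypotheses (hdual : dual_feasible H a bT bR) (hprimal : primal_feasible eps H x y).
Hypothesis hrange : forall p : P N, (1 <= rl p <= H)%N.

(* The cost of routing x over e at tau, split into the primal objective
   and the two loads that the capacity constraints bound. *)
Let serve p e tau := w p * x p e tau * ((tau%:R + (Delta e)%:R) - (rl p)%:R).
Let loadT p (e : T N * Rv N) tau := bT e.1 tau * ((de e)%:R * x p e tau).
Let loadR p (e : T N * Rv N) tau := bR e.2 tau * ((de e)%:R * x p e tau).
Let fixed_cost p := if inPil p then w p * (ellp p)%:R * y p else 0.

(* Covering constraint of p times alpha_p, combined with its dual
   constraints. *)
Lemma packet_bound (p : P N) :
  a p <= \sum_(e in Ep p) \sum_(rl p <= tau < H.+1)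
           (serve p e tau + loadT p e tau + loadR p e tau) + fixed_cost p.
Proof.
have [a0 _ _ reduced_cost a_fixed] := hdual.
have [[x0 y0] cover_fixed cover _ _] := hprimal.
have routed : a p * \sum_(e in Ep p) \sum_(rl p <= tau < H.+1) x p e tau
    <= \sum_(e in Ep p) \sum_(rl p <= tau < H.+1) (serve p e tau + loadT p e tau + loadR p e tau).
  rewrite mulr_sumr; apply: ler_sum => e e_p; rewrite mulr_sumr !big_nat.
  apply: ler_sum => tau tau_range.
  have := ler_wpM2r (x0 p e tau e_p tau_range) (reduced_cost p e tau e_p tau_range).
  by rewrite /serve /loadT /loadR; lra.
rewrite /fixed_cost; case: ifP => [p_fixed | /negbT p_free]; last first.
  by rewrite addr0; apply: le_trans routed; apply: ler_peMr; [exact: a0 | exact: cover].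
have := ler_peMr (a0 p) (cover_fixed p p_fixed); rewrite mulrDr.
by have := ler_wpM2r (y0 p p_fixed) (a_fixed p p_fixed); lra.
Qed.

Lemma transmitter_load :
  \sum_(p : P N) \sum_(e in Ep p) \sum_(rl p <= tau < H.+1) loadT p e tau
  <= (2 + eps)^-1 * \sum_(t : T N) \sum_(1 <= tau < H.+1) bT t tau.
Proof.
have [_ bT0 _ _ _] := hdual; have [_ _ _ capT _] := hprimal.
rewrite (sum_by_time (@Ep R N) loadT hrange) [X in _ <= _ * X]exchange_big.
rewrite mulr_sumr !big_nat.
apply: ler_sum => tau /andP[tau1 tauH]; rewrite mulr_sumr; apply: ler_sum => t _.
rewrite /loadT /=; under eq_bigr => r _ do rewrite -mulr_sumr.
rewrite -mulr_sumr mulrC; apply: ler_wpM2r; first by apply: bT0; rewrite tau1 -ltnS.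
by apply: capT; rewrite -ltnS.
Qed.

Lemma receiver_load :
  \sum_(p : P N) \sum_(e in Ep p) \sum_(rl p <= tau < H.+1) loadR p e tau
  <= (2 + eps)^-1 * \sum_(r : Rv N) \sum_(1 <= tau < H.+1) bR r tau.
Proof.
have [_ _ bR0 _ _] := hdual; have [_ _ _ _ capR] := hprimal.
rewrite (sum_by_time (@Ep R N) loadR hrange) [X in _ <= _ * X]exchange_big.
rewrite mulr_sumr !big_nat.
apply: ler_sum => tau /andP[tau1 tauH]; rewrite exchange_big mulr_sumr.
apply: ler_sum => r _; rewrite /loadR /=; under eq_bigr => t _ do rewrite -mulr_sumr.
rewrite -mulr_sumr mulrC; apply: ler_wpM2r; first by apply: bR0; rewrite tau1 -ltnS.
by apply: capR; rewrite -ltnS.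
Qed.

Lemma weak_duality : dual_obj eps H a bT bR <= primal_obj H x y.
Proof.
have objective : primal_obj H x y = \sum_(p : P N) \sum_(e in Ep p)
    \sum_(rl p <= tau < H.+1) serve p e tau + \sum_(p : P N) fixed_cost p.
  by rewrite /primal_obj; congr (_ + _); rewrite big_mkcond.
have split_cost : \sum_(p : P N) \sum_(e in Ep p) \sum_(rl p <= tau < H.+1)
      (serve p e tau + loadT p e tau + loadR p e tau)
    = \sum_(p : P N) \sum_(e in Ep p) \sum_(rl p <= tau < H.+1) serve p e tau
    + \sum_(p : P N) \sum_(e in Ep p) \sum_(rl p <= tau < H.+1) loadT p e tau
    + \sum_(p : P N) \sum_(e in Ep p) \sum_(rl p <= tau < H.+1) loadR p e tau.
  rewrite -!big_split; apply: eq_bigr => p _; rewrite -!big_split.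
  by apply: eq_bigr => e _; rewrite -!big_split.
have total : \sum_(p : P N) a p <= \sum_(p : P N) \sum_(e in Ep p)
      \sum_(rl p <= tau < H.+1) (serve p e tau + loadT p e tau + loadR p e tau)
    + \sum_(p : P N) fixed_cost p.
  by rewrite -big_split; apply: ler_sum => p _; apply: packet_bound.
move: total; rewrite split_cost /dual_obj objective mulrDr.
by have := transmitter_load; have := receiver_load; lra.
Qed.

End WeakDuality.

Lemma dual_obj_half (R : realType) (N : instance R) (eps : R) (H : nat)
    (a : P N -> R) (bT : T N -> nat -> R) (bR : Rv N -> nat -> R) :
  dual_obj eps H (fun p => a p / 2) (fun t tau => bT t tau / 2) (fun r tau => bR r tau / 2)
  = dual_obj eps H a bT bR / 2.
Proof.
have halve (I : finType) (b : I -> nat -> R) :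
    \sum_(i : I) \sum_(1 <= tau < H.+1) b i tau / 2
    = (\sum_(i : I) \sum_(1 <= tau < H.+1) b i tau) / 2.
  by rewrite mulr_suml; apply: eq_bigr => i _; rewrite mulr_suml.
by rewrite /dual_obj -mulr_suml !halve; lra.
Qed.

Lemma sum_le_support (R : realType) (H hz : nat) (f : nat -> R) : (1 <= hz)%N ->
  (forall tau, 0 <= f tau) -> (forall tau, (hz <= tau)%N -> f tau = 0) ->
  \sum_(1 <= tau < H.+1) f tau <= \sum_(1 <= tau < hz) f tau.
Proof.
move=> hz1 f0 f_support; case: (leqP H.+1 hz) => [H_hz | hz_H].
  rewrite [X in _ <= X](big_cat_nat _ (n := H.+1)) //= lerDl.
  exact: sumr_ge0.
rewrite [X in X <= _](big_cat_nat _ (n := hz)) //=; last exact: ltnW.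
rewrite [X in _ + X](_ : _ = 0) ?addr0 //.
by rewrite big_nat big1 // => tau /andP[/f_support].
Qed.

Section Horizon.
Variables (R : realType) (N : instance R) (A : run N).

(* Every chunk completes before the horizon, so no chunk is active from
   then on and the betas vanish. *)
Lemma fc_lt_horizon (c : P N * nat) : chunk A c -> (fc A c < horizon A)%N.
Proof.
case: c => q k /andP[_ /= k_lt]; rewrite /horizon ltnS.
apply: leq_trans (leq_bigmax q); rewrite /=.
exact: (@leq_bigmax _ (fun k : 'I_(de (ep A q)) => fc A (q, nat_of_ord k)) (Ordinal k_lt)).
Qed.

Lemma beta_after_horizon (sel : T N * Rv N -> bool) (tau : nat) :
  (horizon A <= tau)%N ->
  \sum_(q : P N) \sum_(k < de (ep A q) | active A tau (q, nat_of_ord k) && sel (ep A q))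
     wc A (q, nat_of_ord k) = 0.
Proof.
move=> late; apply: big1 => q _; apply: big1 => k /andP[/andP[/andP[chunk_c _] tau_fc] _].
by have := fc_lt_horizon chunk_c; move: tau_fc late; lia.
Qed.

(* D_eps sums the betas up to the horizon; restricting to [1, H] only
   removes nonnegative terms subtracted from it. *)
Lemma Deps_le_dual_obj (eps : R) (H : nat) :
  (forall p : P N, 0 < w p) -> 0 < eps ->
  Deps A eps <= dual_obj eps H (alpha A) (betaT A) (betaR A).
Proof.
move=> hw eps0; rewrite /Deps /dual_obj lerD2l lerN2.
apply: ler_wpM2l; first by rewrite invr_ge0; lra.
apply: lerD; apply: ler_sum => i _; apply: sum_le_support => // tau.
- exact: betaT_ge0.
- exact: (beta_after_horizon (fun e => e.1 == i)).
- exact: betaR_ge0.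
- exact: (beta_after_horizon (fun e => e.2 == i)).
Qed.

End Horizon.

Theorem mainTheorem6 (R : realType) (N : instance R) (A : run N)
  (* standing assumptions on the network *)
  (hde : forall e, e \in ER N -> (1 <= de e)%N)
  (hEp : forall p : P N, exists e, e \in Ep p)
  (hw : forall p : P N, 0 < w p)
  (hrl : forall p : P N, (1 <= rl p)%N)
  (* ≺ is a strict total order on packets compatible with release times *)
  (hprec_irr : irreflexive ((@prec R N)))
  (hprec_tr : transitive ((@prec R N)))
  (hprec_tot : forall p q : P N, p != q -> (@prec R N) p q || (@prec R N) q p)
  (hprec_rl : forall p q : P N, (rl p < rl q)%N -> (@prec R N) p q)
  (* A is a run of ALG *)
  (hA : ALG_run A)
  (eps : R) (heps : 0 < eps) (H : nat) (hH : forall p : P N, (rl p <= H)%N) :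
  dual_feasible H (fun p => alpha A p / 2)
                  (fun t tau => betaT A t tau / 2) (fun r tau => betaR A r tau / 2)
  /\ ((Deps A eps)%:E <= 2%:E * primal_val N eps H)%E.
Proof.
have halved := halved_dual_feasible hA hw hde hrl hprec_irr hprec_tr hprec_rl H.
have hrange (p : P N) : (1 <= rl p <= H)%N by rewrite hrl hH.
split=> //; rewrite /primal_val -ereal_inf_pZl //.
apply/ereal_infP => _ [_ [x [y [feasible ->]]] <-]; rewrite -EFinM lee_fin.
have := weak_duality halved feasible hrange; rewrite dual_obj_half.
by have := @Deps_le_dual_obj _ _ A eps H hw heps; lra.
Qed.
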